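(* If $p_1,\dots,p_n\in\mathrm{ESPR}$, then there exists $h\in\mathrm{PR}\cap\mathscr{A}_0$ such that $p_1,\dots,p_n\in\mathcal{P}_h$.
   Context: $\mathscr{H}_\infty$: functions analytic and bounded on $\mathrm{Re}(s)>0$; $\mathscr{A}_0$: those in $\mathscr{H}_\infty$ extending continuously to $j\mathbb{R}\cup\{\infty\}$. $g\in\mathrm{PR}$ if $g$ is analytic in $\mathrm{Re}(s)>0$, real for positive real $s$, and $\mathrm{Re}(g(s))\ge0$ for $\mathrm{Re}(s)>0$; $g\in\mathrm{ESPR}$ if moreover $g\in\mathscr{A}_0$ and $g-\epsilon\in\mathrm{PR}$ for some $\epsilon>0$. $\mathcal{P}_h:=\{p\in\mathscr{H}_\infty: p(0)\ne0,\ h(s)(1+p(s)/s)\in\mathrm{ESPR}\}$. *)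

From Stdlib Require Import Reals Lra.
Open Scope R_scope.

Definition Cx : Type := (R * R)%type.
Definition Re (z : Cx) : R := fst z.
Definition Im (z : Cx) : R := snd z.
Definition RtoC (x : R) : Cx := (x, 0).
Definition Cadd (z w : Cx) : Cx := (Re z + Re w, Im z + Im w).
Definition Copp (z : Cx) : Cx := (- Re z, - Im z).
Definition Csub (z w : Cx) : Cx := Cadd z (Copp w).
Definition Cmul (z w : Cx) : Cx :=
  (Re z * Re w - Im z * Im w, Re z * Im w + Im z * Re w).
Definition Cinv (z : Cx) : Cx :=
  (Re z / (Re z ^ 2 + Im z ^ 2), - Im z / (Re z ^ 2 + Im z ^ 2)).
Definition Cdiv (z w : Cx) : Cx := Cmul z (Cinv w).
Definition Cnorm (z : Cx) : R := sqrt (Re z ^ 2 + Im z ^ 2).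
Definition C0 : Cx := (0, 0).
Definition C1 : Cx := (1, 0).

Definition RHP (s : Cx) : Prop := 0 < Re s.

(* complex differentiability (= analyticity) on the open right half-plane;
   only the values of f on Re s > 0 matter *)
Definition Cdifferentiable_at (f : Cx -> Cx) (z : Cx) : Prop :=
  exists l : Cx, forall eps : R, 0 < eps -> exists delta : R, 0 < delta /\
    forall h : Cx, 0 < Cnorm h < delta ->
      Cnorm (Csub (Cdiv (Csub (f (Cadd z h)) (f z)) h) l) < eps.

Definition analytic_RHP (f : Cx -> Cx) : Prop :=
  forall s, RHP s -> Cdifferentiable_at f s.

Definition H_inf (f : Cx -> Cx) : Prop :=
  analytic_RHP f /\ exists M : R, forall s, RHP s -> Cnorm (f s) <= M.

(* A_0: elements of H_inf extending continuously to jR ∪ {∞}, i.e. to the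
   closed right half-plane together with the point at infinity *)
Definition A0 (f : Cx -> Cx) : Prop :=
  H_inf f /\
  exists (g : Cx -> Cx) (Linf : Cx),
    (forall s, RHP s -> g s = f s) /\
    (forall s0, 0 <= Re s0 -> forall eps, 0 < eps -> exists delta, 0 < delta /\
        forall s, 0 <= Re s -> Cnorm (Csub s s0) < delta ->
          Cnorm (Csub (g s) (g s0)) < eps) /\
    (forall eps, 0 < eps -> exists Rb : R,
        forall s, 0 <= Re s -> Rb < Cnorm s -> Cnorm (Csub (g s) Linf) < eps).

Definition PR (g : Cx -> Cx) : Prop :=
  analytic_RHP g /\
  (forall x : R, 0 < x -> Im (g (RtoC x)) = 0) /\
  (forall s, RHP s -> 0 <= Re (g s)).

Definition ESPR (g : Cx -> Cx) : Prop :=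
  A0 g /\ exists eps : R, 0 < eps /\ PR (fun s => Csub (g s) (RtoC eps)).

(* "p(0) <> 0": the boundary value of p at 0 (limit of p(s) as s -> 0 with
   Re s > 0) exists and is nonzero *)
Definition value_at_0_nonzero (p : Cx -> Cx) : Prop :=
  exists c : Cx, c <> C0 /\
    forall eps, 0 < eps -> exists delta, 0 < delta /\
      forall s, RHP s -> Cnorm s < delta -> Cnorm (Csub (p s) c) < eps.

Definition P_class (h : Cx -> Cx) (p : Cx -> Cx) : Prop :=
  H_inf p /\ value_at_0_nonzero p /\
  ESPR (fun s => Cmul (h s) (Cadd C1 (Cdiv (p s) s))).

From Pilot Require Import Defs.
From Stdlib Require Import Reals Lra Lia.
From Coquelicot Require Import Coquelicot.
Open Scope R_scope.

(* Take h(s) = s / (s + a) with a > 0.  Then h(s) (1 + p(s)/s) = (s + p(s)) / (s + a),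
   which inherits analyticity, boundedness and continuity up to the imaginary axis from p, and
   tends to 1 at infinity.  If Re p >= ep > 0 and |p| <= M on Re s > 0, a direct computation gives
   Re ((s + p(s)) / (s + a)) >= ep / (2 a) as soon as a >= ep and a ep >= M^2, so p lies in P_h.
   Each p_i imposes such a lower bound on a; a beyond all of them works for every p_i, and the
   case p = 0 of the same estimates shows that h is itself in PR and in A_0. *)

(* [lim0 P phi l]: phi h -> l as h -> 0 through increments with P h; P h := h <> 0 gives
   difference quotients, P h := D (z + h) continuity relative to D at z. *)
Definition lim0 (P : C -> Prop) (phi : C -> C) (l : C) : Prop :=
  forall eps, 0 < eps -> exists d, 0 < d /\
    forall h, P h -> Cmod h < d -> Cmod (phi h - l)%C < eps.

Lemma Cmod_ge_sub x y : Cmod x - Cmod (y - x)%C <= Cmod y.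
Proof.
pose proof (Cmod_triangle y (- (y - x))%C) as H.
replace (y + - (y - x))%C with x in H by ring; rewrite Cmod_opp in H; lra.
Qed.

Section Lim0.
Variable P : C -> Prop.

Lemma lim0_const c : lim0 P (fun _ => c) c.
Proof.
intros e He; exists 1; split; [lra|]; intros h _ _.
replace (c - c)%C with (RtoC 0) by ring; rewrite Cmod_0; lra.
Qed.

Lemma lim0_id : lim0 P (fun h => h) (RtoC 0).
Proof.
intros e He; exists e; split; [lra|]; intros h _ Hh.
replace (h - 0)%C with h by ring; exact Hh.
Qed.

Lemma lim0_eq f l l' : l = l' -> lim0 P f l -> lim0 P f l'.
Proof. now intros ->. Qed.

Lemma lim0_ext_near f g l :
  (exists d, 0 < d /\ forall h, P h -> Cmod h < d -> f h = g h) ->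
  lim0 P g l -> lim0 P f l.
Proof.
intros [d0 [Hd0 Heq]] Hg e He; destruct (Hg e He) as [d [Hd H]].
exists (Rmin d0 d); split; [now apply Rmin_glb_lt|].
intros h Ph Hh; apply Rmin_Rgt_l in Hh as [H0 H1].
rewrite Heq; auto.
Qed.

Lemma lim0_add f g lf lg : lim0 P f lf -> lim0 P g lg ->
  lim0 P (fun h => f h + g h)%C (lf + lg)%C.
Proof.
intros Hf Hg e He.
destruct (Hf (e/2)) as [d1 [Hd1 H1]]; [lra|].
destruct (Hg (e/2)) as [d2 [Hd2 H2]]; [lra|].
exists (Rmin d1 d2); split; [now apply Rmin_glb_lt|].
intros h Ph Hh; apply Rmin_Rgt_l in Hh as [h1 h2].
replace (f h + g h - (lf + lg))%C with ((f h - lf) + (g h - lg))%C by ring.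
eapply Rle_lt_trans; [apply Cmod_triangle|].
specialize (H1 h Ph h1); specialize (H2 h Ph h2); lra.
Qed.

Lemma lim0_opp f l : lim0 P f l -> lim0 P (fun h => - f h)%C (- l)%C.
Proof.
intros H e He; destruct (H e He) as [d [Hd H']]; exists d; split; auto.
intros h Ph Hh; replace (- f h - - l)%C with (- (f h - l))%C by ring.
rewrite Cmod_opp; auto.
Qed.

Lemma lim0_mul f g lf lg : lim0 P f lf -> lim0 P g lg ->
  lim0 P (fun h => f h * g h)%C (lf * lg)%C.
Proof.
intros Hf Hg e He.
set (K := 1 + Cmod lf + Cmod lg).
assert (HK : 1 <= K) by (pose proof (Cmod_ge_0 lf); pose proof (Cmod_ge_0 lg); unfold K; lra).
set (eta := Rmin 1 (e / K)).
assert (Heta : 0 < eta) by (apply Rmin_glb_lt; [lra | apply Rdiv_lt_0_compat; lra]).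
assert (HetaK : eta * K <= e).
{ assert (eta <= e / K) by apply Rmin_r.
  replace e with (e / K * K) by (field; lra); apply Rmult_le_compat_r; lra. }
destruct (Hf eta Heta) as [d1 [Hd1 H1]]; destruct (Hg eta Heta) as [d2 [Hd2 H2]].
exists (Rmin d1 d2); split; [now apply Rmin_glb_lt|].
intros h Ph Hh; apply Rmin_Rgt_l in Hh as [h1 h2].
specialize (H1 h Ph h1); specialize (H2 h Ph h2).
replace (f h * g h - lf * lg)%C
  with ((f h - lf) * (g h - lg) + (f h - lf) * lg + lf * (g h - lg))%C by ring.
set (A := (f h - lf)%C) in *; set (B := (g h - lg)%C) in *.
assert (eta <= 1) by apply Rmin_l.
pose proof (Cmod_ge_0 A); pose proof (Cmod_ge_0 B).
pose proof (Cmod_ge_0 lf); pose proof (Cmod_ge_0 lg).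
eapply Rle_lt_trans; [apply Cmod_triangle|].
eapply Rle_lt_trans; [apply Rplus_le_compat_r, Cmod_triangle|].
rewrite !Cmod_mult; unfold K in HetaK; nra.
Qed.

Lemma lim0_inv f l : l <> RtoC 0 -> lim0 P f l -> lim0 P (fun h => / f h)%C (/ l)%C.
Proof.
intros Hl H e He.
assert (HL : 0 < Cmod l) by now apply Cmod_gt_0.
destruct (H (Rmin (Cmod l / 2) (e * (Cmod l * Cmod l) / 2))) as [d [Hd H']].
{ apply Rmin_glb_lt; [lra|]. apply Rdiv_lt_0_compat; [|lra]. apply Rmult_lt_0_compat; nra. }
exists d; split; auto; intros h Ph Hh; specialize (H' h Ph Hh); apply Rmin_Rgt_l in H' as [Ha Hb].
assert (HA : Cmod l / 2 < Cmod (f h)) by (pose proof (Cmod_ge_sub l (f h)); lra).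
assert (Hfh : f h <> RtoC 0) by (apply Cmod_gt_0; lra).
replace (/ f h - / l)%C with (- (f h - l) * / f h * / l)%C by (field; auto).
rewrite !Cmod_mult, !Cmod_inv, Cmod_opp by auto.
set (E := Cmod (f h - l)%C) in *; set (A := Cmod (f h)) in *; set (L := Cmod l) in *.
replace (E * / A * / L) with (E / (A * L)) by (field; lra).
apply Rlt_div_l; [nra|].
assert (0 < (A - L/2) * (e * L)) by (apply Rmult_lt_0_compat; nra). nra.
Qed.

End Lim0.

Definition cont_within (D : C -> Prop) (f : C -> C) (z : C) :=
  lim0 (fun h => D (z + h)%C) (fun h => f (z + h)%C) (f z).

Section ContWithin.
Variable D : C -> Prop.

Lemma cont_within_const c z : cont_within D (fun _ => c) z.
Proof. apply lim0_const. Qed.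

Lemma cont_within_id z : cont_within D (fun s => s) z.
Proof.
eapply lim0_eq; [|apply lim0_add; [apply lim0_const|apply lim0_id]]; ring.
Qed.

Lemma cont_within_add f g z : cont_within D f z -> cont_within D g z ->
  cont_within D (fun s => f s + g s)%C z.
Proof. apply lim0_add. Qed.

Lemma cont_within_mul f g z : cont_within D f z -> cont_within D g z ->
  cont_within D (fun s => f s * g s)%C z.
Proof. apply lim0_mul. Qed.

Lemma cont_within_inv f z : f z <> RtoC 0 -> cont_within D f z ->
  cont_within D (fun s => / f s)%C z.
Proof. apply lim0_inv. Qed.

End ContWithin.

Definition is_Cderive (f : C -> C) z l :=
  lim0 (fun h => h <> RtoC 0) (fun h => (f (z + h) - f z) / h)%C l.

Definition ex_Cderive f z := exists l, is_Cderive f z l.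

Lemma is_Cderive_cont f z l : is_Cderive f z l ->
  lim0 (fun h => h <> RtoC 0) (fun h => f (z + h)%C) (f z).
Proof.
intros H.
apply lim0_ext_near with (g := fun h => (f z + h * ((f (z + h) - f z) / h))%C).
{ exists 1; split; [lra|]; intros h Hh _; field; auto. }
eapply lim0_eq; [|apply lim0_add; [apply lim0_const| apply lim0_mul; [apply lim0_id| exact H]]].
ring.
Qed.

Lemma ex_Cderive_const c z : ex_Cderive (fun _ => c) z.
Proof.
exists (RtoC 0); apply lim0_ext_near with (g := fun _ => RtoC 0); [|apply lim0_const].
exists 1; split; [lra|]; intros h Hh _; field; auto.
Qed.

Lemma ex_Cderive_id z : ex_Cderive (fun s => s) z.
Proof.
exists (RtoC 1); apply lim0_ext_near with (g := fun _ => RtoC 1); [|apply lim0_const].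
exists 1; split; [lra|]; intros h Hh _; field; auto.
Qed.

Lemma ex_Cderive_add f g z : ex_Cderive f z -> ex_Cderive g z ->
  ex_Cderive (fun s => f s + g s)%C z.
Proof.
intros [lf Hf] [lg Hg]; exists (lf + lg)%C.
apply lim0_ext_near with (g := fun h => ((f (z + h) - f z) / h + (g (z + h) - g z) / h)%C).
{ exists 1; split; [lra|]; intros h Hh _; field; auto. }
now apply lim0_add.
Qed.

Lemma ex_Cderive_mul f g z : ex_Cderive f z -> ex_Cderive g z ->
  ex_Cderive (fun s => f s * g s)%C z.
Proof.
intros [lf Hf] [lg Hg]; exists (lf * g z + f z * lg)%C.
apply lim0_ext_near
  with (g := fun h => ((f (z + h) - f z) / h * g (z + h) + f z * ((g (z + h) - g z) / h))%C).
{ exists 1; split; [lra|]; intros h Hh _; field; auto. }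
apply lim0_add; apply lim0_mul; [exact Hf | exact (is_Cderive_cont _ _ _ Hg) | apply lim0_const | exact Hg].
Qed.

Lemma ex_Cderive_inv g z : g z <> RtoC 0 -> ex_Cderive g z -> ex_Cderive (fun s => / g s)%C z.
Proof.
intros Hz [lg Hg]; exists (- lg * / g z * / g z)%C.
pose proof (is_Cderive_cont _ _ _ Hg) as Hc.
assert (HL : 0 < Cmod (g z)) by now apply Cmod_gt_0.
destruct (Hc (Cmod (g z)) HL) as [d [Hd Hd']].
apply lim0_ext_near
  with (g := fun h => (- ((g (z + h) - g z) / h) * / g (z + h) * / g z)%C).
{ exists d; split; auto; intros h Hh Hhd; specialize (Hd' h Hh Hhd).
  assert (g (z + h)%C <> RtoC 0).
  { intros E; rewrite E in Hd'; replace (RtoC 0 - g z)%C with (- g z)%C in Hd' by ring.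
    rewrite Cmod_opp in Hd'; lra. }
  field; auto. }
apply lim0_mul; [|apply lim0_const]; apply lim0_mul; [now apply lim0_opp|].
now apply lim0_inv.
Qed.

Lemma ex_Cderive_Cdifferentiable f z : ex_Cderive f z <-> Cdifferentiable_at f z.
Proof.
split; intros [l H]; exists l; intros e He; destruct (H e He) as [d [Hd H']];
  exists d; split; auto.
- intros h [H0 H1]; apply H'; auto; now apply Cmod_gt_0.
- intros h H0 H1; apply H'; split; auto; now apply Cmod_gt_0.
Qed.

Lemma RHP_neq0 s : RHP s -> s <> RtoC 0.
Proof. intros H E; rewrite E in H; unfold RHP in H; simpl in H; lra. Qed.

Lemma Cmod_add_pos_real s a : 0 <= Re s -> 0 < a ->
  Cmod s <= Cmod (s + RtoC a)%C /\ a <= Cmod (s + RtoC a)%C.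
Proof.
intros Hs Ha; destruct s as [x y]; simpl in Hs; unfold Cmod; simpl; split.
- apply sqrt_le_1_alt; nra.
- rewrite <- (sqrt_pow2 a) at 1 by lra; apply sqrt_le_1_alt; nra.
Qed.

Lemma add_pos_real_neq0 s a : 0 <= Re s -> 0 < a -> (s + RtoC a)%C <> RtoC 0.
Proof.
intros Hs Ha E; destruct (Cmod_add_pos_real s a Hs Ha) as [_ H].
rewrite E, Cmod_0 in H; lra.
Qed.

Lemma Re_Cdiv z w : w <> RtoC 0 ->
  Re (z / w)%C = (Re z * Re w + Im z * Im w) / (Re w ^ 2 + Im w ^ 2).
Proof.
intros Hw; apply Cmod_gt_0 in Hw.
assert (Hd : 0 < Re w ^ 2 + Im w ^ 2) by (rewrite <- Cmod2_alt; nra).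
destruct z as [u v], w as [x y]; unfold Cdiv, Cmult, Cinv; simpl in *.
field; lra.
Qed.

Section ShiftQuotient.
Variables (a : R) (s u : C).
Hypotheses (Ha : 0 < a) (Hs : 0 <= Re s).

Lemma shift_quotient_Cmod_le : Cmod ((s + u) / (s + RtoC a))%C <= 1 + Cmod u / a.
Proof.
destruct (Cmod_add_pos_real s a Hs Ha) as [H1 H2].
rewrite Cmod_div by now apply add_pos_real_neq0.
pose proof (Cmod_triangle s u); pose proof (Cmod_ge_0 u).
apply Rle_div_l; [lra|].
assert (Cmod u <= Cmod u / a * Cmod (s + RtoC a)%C).
{ replace (Cmod u) with (Cmod u / a * a) at 1 by (field; lra).
  apply Rmult_le_compat_l; [apply Rdiv_le_0_compat|]; lra. }
lra.
Qed.

Lemma shift_quotient_sub1_Cmod_le :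
  Cmod s * Cmod ((s + u) / (s + RtoC a) - 1)%C <= Cmod u + a.
Proof.
pose proof (add_pos_real_neq0 s a Hs Ha) as Hn.
destruct (Cmod_add_pos_real s a Hs Ha) as [H1 H2].
replace ((s + u) / (s + RtoC a) - 1)%C with ((u - RtoC a) / (s + RtoC a))%C by (field; auto).
rewrite Cmod_div by auto.
assert (Cmod (u - RtoC a)%C <= Cmod u + a).
{ pose proof (Cmod_triangle u (- RtoC a)%C).
  rewrite Cmod_opp, Cmod_R, Rabs_pos_eq in H by lra; exact H. }
pose proof (Cmod_ge_0 s); pose proof (Cmod_ge_0 (u - RtoC a)%C).
replace (Cmod s * (Cmod (u - RtoC a)%C / Cmod (s + RtoC a)%C))
  with (Cmod (u - RtoC a)%C * (Cmod s / Cmod (s + RtoC a)%C)) by (field; lra).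
assert (Cmod s / Cmod (s + RtoC a)%C <= 1) by (apply Rle_div_l; lra).
nra.
Qed.

Lemma shift_quotient_Re_ge ep M : 0 <= ep -> ep <= a -> M * M <= a * ep ->
  ep <= Re u -> Cmod u <= M -> ep / (2 * a) <= Re ((s + u) / (s + RtoC a))%C.
Proof.
intros Hep Hepa HM Hu HuM.
pose proof (add_pos_real_neq0 s a Hs Ha) as Hn.
pose proof (proj1 (Cmod_gt_0 _) Hn) as Hn'.
rewrite Re_Cdiv by auto.
assert (Huv : Re u ^ 2 + Im u ^ 2 <= M * M).
{ rewrite <- Cmod2_alt; pose proof (Cmod_ge_0 u); nra. }
assert (Hd : 0 < Re (s + RtoC a) ^ 2 + Im (s + RtoC a) ^ 2) by (rewrite <- Cmod2_alt; nra).
apply (Rle_div_r _ _ _ Hd).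
replace (ep / (2 * a) * _) with (ep * (Re (s + RtoC a) ^ 2 + Im (s + RtoC a) ^ 2) / (2 * a))
  by (field; lra).
apply Rle_div_l; [lra|].
destruct s as [x y], u as [u1 u2]; simpl in *.
(* after expanding, a (y + u2)^2 absorbs the cross term 2 a y u2, and the resulting
   - a u2^2 is paid for by a (a ep - u2^2) >= 0; all other terms are nonnegative *)
assert (0 <= (a - ep) * (x * x)) by (apply Rmult_le_pos; [lra | apply Rle_0_sqr]).
assert (0 <= a * ((u2 + y) * (u2 + y))) by (apply Rmult_le_pos; [lra | apply Rle_0_sqr]).
assert (0 <= a * (a * ep - u2 * u2)) by (apply Rmult_le_pos; [lra|]; pose proof (pow2_ge_0 u1); simpl in Huv; lra).
assert (0 <= a * a * (u1 - ep)) by (apply Rmult_le_pos; nra).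
assert (0 <= (a - ep) * (y * y)) by (apply Rmult_le_pos; [lra | apply Rle_0_sqr]).
assert (0 <= a * (x * x)) by (apply Rmult_le_pos; [lra | apply Rle_0_sqr]).
assert (0 <= a * (a - ep) * x) by (apply Rmult_le_pos; [apply Rmult_le_pos|]; lra).
assert (0 <= a * u1 * x) by (apply Rmult_le_pos; [apply Rmult_le_pos|]; lra).
nra.
Qed.

End ShiftQuotient.

Lemma shift_quotient_real (x a : R) (u : C) : 0 < x -> 0 < a -> Im u = 0 ->
  Im ((RtoC x + u) / (RtoC x + RtoC a))%C = 0.
Proof.
intros Hx Ha Hu; destruct u as [u1 u2]; simpl in Hu; subst u2.
unfold Cdiv, Cmult, Cinv, Cplus, RtoC; simpl; field; nra.
Qed.

Definition CRHP (s : C) : Prop := 0 <= Re s.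

Lemma RHP_CRHP s : RHP s -> CRHP s.
Proof. exact (Rlt_le _ _). Qed.

Lemma RHP_add_small s h : RHP s -> Cmod h < Re s -> RHP (s + h)%C.
Proof.
intros Hs Hh; pose proof (re_le_Cmod h); pose proof (Rle_abs (- Re h)).
rewrite Rabs_Ropp in *; unfold RHP in *; change (0 < Re s + Re h); lra.
Qed.

Lemma analytic_RHP_ext f g : (forall s, RHP s -> f s = g s) ->
  analytic_RHP f -> analytic_RHP g.
Proof.
intros Heq Hf s Hs; apply ex_Cderive_Cdifferentiable.
destruct (proj2 (ex_Cderive_Cdifferentiable _ _) (Hf s Hs)) as [l Hl]; exists l.
apply lim0_ext_near with (g := fun h => ((f (s + h) - f s) / h)%C); [|exact Hl].
exists (Re s); split; [exact Hs|]; intros h _ Hh.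
rewrite !Heq; auto using RHP_add_small.
Qed.

Lemma cont_within_CRHP_iff (g : C -> C) :
  (forall s0, CRHP s0 -> cont_within CRHP g s0) <->
  (forall s0 : Cx, 0 <= Defs.Re s0 -> forall eps, 0 < eps -> exists delta, 0 < delta /\
     forall s : Cx, 0 <= Defs.Re s -> Cnorm (Csub s s0) < delta -> Cnorm (Csub (g s) (g s0)) < eps).
Proof.
split; intros H s0 Hs0 e He; destruct (H s0 Hs0 e He) as [d [Hd H']];
  exists d; split; auto.
- intros s Hs Hsd; specialize (H' (s - s0)%C).
  assert (E : (s0 + (s - s0))%C = s :> C) by ring; rewrite E in H'; now apply H'.
- intros h Hh Hhd; apply H'; auto.
  change (Cmod ((s0 + h) - s0)%C < d); now replace ((s0 + h) - s0)%C with h by ring.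
Qed.

Lemma cont_within_CRHP_bounded (g : C -> C) M :
  (forall s, RHP s -> Cmod (g s) <= M) ->
  (forall s0, CRHP s0 -> cont_within CRHP g s0) ->
  forall s, CRHP s -> Cmod (g s) <= M.
Proof.
intros Hb Hc s Hs; apply Rnot_lt_le; intros Hlt.
destruct (Hc s Hs (Cmod (g s) - M)) as [d [Hd H]]; [lra|].
assert (Hin : RHP (s + RtoC (d / 2))%C) by (unfold RHP, CRHP, Defs.Re, Re in *; simpl; lra).
assert (Hnear : Cmod (g (s + RtoC (d / 2)) - g s)%C < Cmod (g s) - M).
{ apply H; [now apply RHP_CRHP | rewrite Cmod_R, Rabs_pos_eq; lra]. }
pose proof (Hb _ Hin); pose proof (Cmod_ge_sub (g s) (g (s + RtoC (d / 2))%C)); lra.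
Qed.

Section ShiftQuotientFunction.
Variables (a ep M : R) (g gb F : C -> C).
Hypotheses (Ha : 0 < a) (Hep : 0 <= ep) (Hepa : ep <= a) (HM : M * M <= a * ep).
Hypotheses (g_analytic : analytic_RHP g)
  (g_bound : forall s, RHP s -> Cmod (g s) <= M)
  (g_Re : forall s, RHP s -> ep <= Re (g s))
  (g_real : forall x, 0 < x -> Im (g (RtoC x)) = 0).
Hypotheses (gb_ext : forall s, RHP s -> gb s = g s)
  (gb_cont : forall s0, CRHP s0 -> cont_within CRHP gb s0).
Hypothesis F_eq : forall s, RHP s -> F s = ((s + g s) / (s + RtoC a))%C.

Lemma shift_quotient_analytic : analytic_RHP F.
Proof.
apply analytic_RHP_ext with (f := fun s => ((s + g s) / (s + RtoC a))%C).
{ intros s Hs; symmetry; now apply F_eq. }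
intros s Hs; apply ex_Cderive_Cdifferentiable; apply ex_Cderive_mul.
- apply ex_Cderive_add; [apply ex_Cderive_id|].
  now apply ex_Cderive_Cdifferentiable, g_analytic.
- apply ex_Cderive_inv; [apply add_pos_real_neq0; [apply RHP_CRHP|]; auto|].
  apply ex_Cderive_add; [apply ex_Cderive_id | apply ex_Cderive_const].
Qed.

Lemma shift_quotient_A0 : A0 F.
Proof.
assert (gb_bound : forall s, CRHP s -> Cmod (gb s) <= M).
{ apply cont_within_CRHP_bounded; auto; intros s Hs; rewrite gb_ext; auto. }
split.
{ split; [exact shift_quotient_analytic|]; exists (1 + M / a); intros s Hs; rewrite F_eq by exact Hs.
  eapply Rle_trans; [exact (shift_quotient_Cmod_le a s (g s) Ha (RHP_CRHP s Hs))|].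
  pose proof (g_bound s Hs); apply Rplus_le_compat_l, Rmult_le_compat_r; auto.
  left; now apply Rinv_0_lt_compat. }
exists (fun s => ((s + gb s) / (s + RtoC a))%C), (RtoC 1); split; [|split].
- intros s Hs; rewrite F_eq, gb_ext; auto.
- apply cont_within_CRHP_iff; intros s0 Hs0.
  apply cont_within_mul; [apply cont_within_add; auto using cont_within_id|].
  apply cont_within_inv; [now apply add_pos_real_neq0|].
  apply cont_within_add; [apply cont_within_id | apply cont_within_const].
- intros e He; exists ((M + a) / e); intros s Hs Hb.
  pose proof (shift_quotient_sub1_Cmod_le a s (gb s) Ha Hs).
  pose proof (gb_bound s Hs); pose proof (Cmod_ge_0 ((s + gb s) / (s + RtoC a) - 1)%C).
  apply Rlt_div_l in Hb; [|lra]; change Cnorm with Cmod in Hb.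
  change (Cmod ((s + gb s) / (s + RtoC a) - 1)%C < e).
  pose proof (Cmod_ge_0 (gb s)); nra.
Qed.

Lemma shift_quotient_PR_margin : PR (fun s => Csub (F s) (RtoC (ep / (2 * a)))).
Proof.
split; [|split].
- intros s Hs; apply ex_Cderive_Cdifferentiable, ex_Cderive_add; [|apply ex_Cderive_const].
  now apply ex_Cderive_Cdifferentiable, shift_quotient_analytic.
- intros x Hx; change (Im (F (RtoC x)) + - 0 = 0).
  rewrite F_eq by (unfold RHP; simpl; lra).
  rewrite shift_quotient_real by auto; ring.
- intros s Hs; change (0 <= Re (F s) + - (ep / (2 * a))); rewrite F_eq by exact Hs.
  pose proof (shift_quotient_Re_ge a s (g s) Ha (RHP_CRHP s Hs) ep M Hep Hepa HM
    (g_Re s Hs) (g_bound s Hs)); lra.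
Qed.

End ShiftQuotientFunction.

Lemma PR_of_PR_sub_const f c : 0 <= c -> PR (fun s => Csub (f s) (RtoC c)) -> PR f.
Proof.
intros Hc [Han [Hreal HRe]]; split; [|split].
- apply analytic_RHP_ext with (f := fun s => (Csub (f s) (RtoC c) + RtoC c)%C).
  { intros s _; change ((f s - RtoC c) + RtoC c = f s)%C; ring. }
  intros s Hs; apply ex_Cderive_Cdifferentiable, ex_Cderive_add; [|apply ex_Cderive_const].
  now apply ex_Cderive_Cdifferentiable, Han.
- intros x Hx; specialize (Hreal x Hx); simpl in Hreal; unfold Defs.Im in *; lra.
- intros s Hs; specialize (HRe s Hs); simpl in HRe; unfold Defs.Re in *; lra.
Qed.

Definition hfun (a : R) (s : C) : C := (s / (s + RtoC a))%C.

Section Hfun.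
Variable a : R.
Hypothesis Ha : 0 < a.

Lemma hfun_A0 : A0 (hfun a).
Proof.
apply (shift_quotient_A0 a 0 0 (fun _ => RtoC 0) (fun _ => RtoC 0)); auto; try lra.
- intros s _; apply ex_Cderive_Cdifferentiable, ex_Cderive_const.
- intros s _; rewrite Cmod_0; lra.
- intros s0 _; apply cont_within_const.
- intros s _; unfold hfun; now rewrite Cplus_0_r.
Qed.

Lemma hfun_PR : PR (hfun a).
Proof.
apply PR_of_PR_sub_const with (c := 0 / (2 * a)); [unfold Rdiv; lra|].
apply (shift_quotient_PR_margin a 0 0 (fun _ => RtoC 0)); auto; try lra.
- intros s _; apply ex_Cderive_Cdifferentiable, ex_Cderive_const.
- intros s _; rewrite Cmod_0; lra.
- intros s _; simpl; lra.
- intros s _; unfold hfun; now rewrite Cplus_0_r.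
Qed.

Lemma hfun_mul_eq (p : C -> C) s : RHP s ->
  Cmul (hfun a s) (Cadd Defs.C1 (Cdiv (p s) s)) = ((s + p s) / (s + RtoC a))%C.
Proof.
intros Hs; pose proof (RHP_neq0 s Hs); pose proof (add_pos_real_neq0 s a (RHP_CRHP s Hs) Ha).
change (hfun a s * (RtoC 1 + p s / s) = (s + p s) / (s + RtoC a))%C.
unfold hfun; field; auto.
Qed.

End Hfun.

Lemma value_at_0_nonzero_of_Re_ge p gb ep : 0 < ep ->
  (forall s, RHP s -> ep <= Re (p s)) ->
  (forall s, RHP s -> gb s = p s) ->
  cont_within CRHP gb (RtoC 0) ->
  value_at_0_nonzero p.
Proof.
intros Hep HRe Hext Hc; exists (gb (RtoC 0)); split.
- intros Hz; destruct (Hc ep Hep) as [d [Hd H]].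
  assert (Hs : RHP (RtoC (d / 2))) by (unfold RHP, Defs.Re; simpl; lra).
  specialize (H (RtoC (d / 2))); rewrite Cplus_0_l in H.
  rewrite Hext, Hz in H by exact Hs.
  assert (Hlt : Cmod (p (RtoC (d / 2)) - RtoC 0)%C < ep).
  { apply H; [now apply RHP_CRHP | rewrite Cmod_R, Rabs_pos_eq; lra]. }
  replace (p (RtoC (d / 2)) - RtoC 0)%C with (p (RtoC (d / 2)) : C) in Hlt by ring.
  pose proof (re_le_Cmod (p (RtoC (d / 2)))); pose proof (Rle_abs (Re (p (RtoC (d / 2))))).
  pose proof (HRe _ Hs); lra.
- intros e He; destruct (Hc e He) as [d [Hd H]]; exists d; split; auto.
  intros s Hs Hsd; specialize (H s); rewrite Cplus_0_l in H.
  rewrite <- Hext by exact Hs; apply H; auto using RHP_CRHP.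
Qed.

Lemma ESPR_P_class_hfun p : ESPR p ->
  exists a0, 0 < a0 /\ forall a, a0 <= a -> P_class (hfun a) p.
Proof.
intros [[[Han [M HM]] [gb [Linf [Hext [Hcont _]]]]] [ep [Hep [_ [Hreal HRe]]]]].
pose proof (proj2 (cont_within_CRHP_iff gb) Hcont) as gb_cont.
assert (p_Re : forall s, RHP s -> ep <= Re (p s)).
{ intros s Hs; specialize (HRe s Hs); change (0 <= Re (p s) + - ep) in HRe; lra. }
assert (p_real : forall x, 0 < x -> Im (p (RtoC x)) = 0).
{ intros x Hx; specialize (Hreal x Hx); change (Im (p (RtoC x)) + - 0 = 0) in Hreal; lra. }
assert (HMep : 0 <= M * M / ep) by (apply Rdiv_le_0_compat; nra).
exists (ep + M * M / ep); split; [lra|]; intros a Ha0.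
assert (Ha : 0 < a) by lra.
(* a >= ep + M^2/ep gives both a >= ep and a ep >= M^2 *)
assert (HMa : M * M <= a * ep).
{ replace (M * M) with (M * M / ep * ep) by (field; lra); nra. }
split; [split; [exact Han | now exists M] | split].
- apply (value_at_0_nonzero_of_Re_ge p gb ep); auto.
  apply gb_cont; unfold CRHP; simpl; lra.
- assert (HF := fun s => hfun_mul_eq a Ha p s).
  split.
  + apply (shift_quotient_A0 a ep M p gb); auto; lra.
  + exists (ep / (2 * a)); split; [apply Rdiv_lt_0_compat; lra|].
    apply (shift_quotient_PR_margin a ep M p); auto; lra.
Qed.

Lemma ex_common_threshold (Q : nat -> R -> Prop) (n : nat) :
  (forall i, (i < n)%nat -> exists a0, 0 < a0 /\ forall a, a0 <= a -> Q i a) ->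
  exists A, 0 < A /\ forall i, (i < n)%nat -> forall a, A <= a -> Q i a.
Proof.
induction n as [|n IH]; intros H.
- exists 1; split; [lra|]; intros; lia.
- destruct IH as [A [HA HQ]]; [intros i Hi; apply H; lia|].
  destruct (H n ltac:(lia)) as [a0 [Ha0 Hq]].
  exists (Rmax A a0); split; [eapply Rlt_le_trans; [exact HA | apply Rmax_l]|].
  intros i Hi a Ha; destruct (Nat.eq_dec i n) as [->|Hne].
  + apply Hq; eapply Rle_trans; [apply Rmax_r | exact Ha].
  + apply HQ; [lia|]; eapply Rle_trans; [apply Rmax_l | exact Ha].
Qed.

Theorem lemma6 (n : nat) (p : nat -> Cx -> Cx) :
  (forall i : nat, (i < n)%nat -> ESPR (p i)) ->
  exists h : Cx -> Cx, PR h /\ A0 h /\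
    forall i : nat, (i < n)%nat -> P_class h (p i).
Proof.
intros Hp.
destruct (ex_common_threshold (fun i a => P_class (hfun a) (p i)) n) as [A [HA HQ]].
{ intros i Hi; now apply ESPR_P_class_hfun, Hp. }
exists (hfun A); split; [now apply hfun_PR | split; [now apply hfun_A0|]].
intros i Hi; apply HQ; auto; lra.
Qed.
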